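(* Let $n\geq 2$ be an integer and $t\in[0,1]$, and let \[ \mu_{0}= \frac{(3-2n)t+1-2n+\sqrt{(1-t)[(4n-5)t+4n^2-4n+1]} }{2(n-1)^2}. \] Then \[ -\frac{t}{n}\geq \mu_{0}\geq -\frac{t^2 + (2n+1)t}{n^2-t} \geq -\frac{2}{n-1}t. \] *)

From Stdlib Require Import Reals.
Open Scope R_scope.

Definition mu0 (n : nat) (t : R) : R :=
  let N := INR n in
  ((3 - 2 * N) * t + 1 - 2 * N
     + sqrt ((1 - t) * ((4 * N - 5) * t + 4 * N ^ 2 - 4 * N + 1)))
  / (2 * (N - 1) ^ 2).

(** The three bounds reduce, after clearing the positive denominators, to
    polynomial inequalities in [N] and [t].  The two involving the square root
    are settled by squaring: the gaps between the squares factor as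
    [4 t (N-1)^2 (N+1) (N+t)] and [4 t (1-t) (N-1)^3 (N+1) (N+t)^2], which are
    nonnegative for [N > 1] and [0 <= t <= 1]; the linear bound amounts to
    [t (1-t) (N+1) >= 0]. *)

From Stdlib Require Import Reals Lra Lia Psatz.
Open Scope R_scope.

Lemma Rdiv_le_Rdiv (a b c d : R) :
  0 < b -> 0 < d -> a * d <= c * b -> a / b <= c / d.
Proof.
  intros Hb Hd Hcross.
  replace (a / b) with (a * d * / (b * d)) by (field; lra).
  replace (c / d) with (c * b * / (b * d)) by (field; lra).
  apply Rmult_le_compat_r; [left; apply Rinv_0_lt_compat; nra | exact Hcross].
Qed.

Lemma sqrt_mul_sqr (m c : R) : 0 <= m -> 0 <= c -> m * sqrt c = sqrt (m * m * c).
Proof.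
  intros Hm Hc.
  rewrite sqrt_mult by nra.
  now rewrite sqrt_square.
Qed.

Lemma le_mul_sqrt (a m c : R) :
  0 <= m -> 0 <= c -> a * a <= m * m * c -> a <= m * sqrt c.
Proof.
  intros Hm Hc Hsq.
  rewrite sqrt_mul_sqr by assumption.
  apply Rle_trans with (Rabs a); [apply Rle_abs |].
  rewrite <- sqrt_Rsqr_abs.
  now apply sqrt_le_1_alt.
Qed.

Lemma mul_sqrt_le (b m c : R) :
  0 <= m -> 0 <= c -> 0 <= b -> m * m * c <= b * b -> m * sqrt c <= b.
Proof.
  intros Hm Hc Hb Hsq.
  rewrite sqrt_mul_sqr by assumption.
  rewrite <- (sqrt_square b Hb).
  now apply sqrt_le_1_alt.
Qed.

Definition mu0_disc (N t : R) : R :=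
  (1 - t) * ((4 * N - 5) * t + 4 * N ^ 2 - 4 * N + 1).

Definition mu0R (N t : R) : R :=
  ((3 - 2 * N) * t + 1 - 2 * N + sqrt (mu0_disc N t)) / (2 * (N - 1) ^ 2).

Lemma mu0_INR (n : nat) (t : R) : mu0 n t = mu0R (INR n) t.
Proof. reflexivity. Qed.

Section Mu0Bounds.

Variables N t : R.
Hypothesis HN : 1 < N.
Hypothesis Ht : 0 <= t <= 1.

Lemma mu0_disc_ge0 : 0 <= mu0_disc N t.
Proof. unfold mu0_disc; apply Rmult_le_pos; nra. Qed.

Lemma mu0R_le_neg_t_div : mu0R N t <= - t / N.
Proof.
  unfold mu0R; apply Rdiv_le_Rdiv; [nra | lra |].
  assert (Hsqrt : N * sqrt (mu0_disc N t) <= N * (2 * N - 1) + t * (N - 2)).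
  { apply mul_sqrt_le; [lra | exact mu0_disc_ge0 | nra |].
    assert (Hgap : (N * (2 * N - 1) + t * (N - 2)) ^ 2 - N * N * mu0_disc N t
                   = 4 * t * (N - 1) ^ 2 * (N + 1) * (N + t))
      by (unfold mu0_disc; ring).
    assert (0 <= 4 * t * (N - 1) ^ 2 * (N + 1) * (N + t))
      by (repeat apply Rmult_le_pos; nra).
    nra. }
  nra.
Qed.

Lemma mu0R_ge_rational_bound :
  - (t ^ 2 + (2 * N + 1) * t) / (N ^ 2 - t) <= mu0R N t.
Proof.
  unfold mu0R; apply Rdiv_le_Rdiv; [nra | nra |].
  set (lhs := (2 * N - 1 + (2 * N - 3) * t) * (N ^ 2 - t)
              - 2 * (N - 1) ^ 2 * (t ^ 2 + (2 * N + 1) * t)).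
  assert (Hsqrt : lhs <= (N ^ 2 - t) * sqrt (mu0_disc N t)).
  { apply le_mul_sqrt; [nra | exact mu0_disc_ge0 |].
    assert (Hgap : (N ^ 2 - t) * (N ^ 2 - t) * mu0_disc N t - lhs * lhs
                   = 4 * t * (1 - t) * (N - 1) ^ 3 * (N + 1) * (N + t) ^ 2)
      by (unfold lhs, mu0_disc; ring).
    assert (0 <= 4 * t * (1 - t) * (N - 1) ^ 3 * (N + 1) * (N + t) ^ 2)
      by (repeat apply Rmult_le_pos; try apply pow_le; lra).
    lra. }
  unfold lhs in Hsqrt; nra.
Qed.

Lemma rational_bound_ge_linear :
  - (2 / (N - 1)) * t <= - (t ^ 2 + (2 * N + 1) * t) / (N ^ 2 - t).
Proof.
  replace (- (2 / (N - 1)) * t) with (- (2 * t) / (N - 1)) by (field; lra).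
  apply Rdiv_le_Rdiv; [lra | nra |].
  assert (Hgap : - (t ^ 2 + (2 * N + 1) * t) * (N - 1) - - (2 * t) * (N ^ 2 - t)
                 = t * (1 - t) * (N + 1)) by ring.
  assert (0 <= t * (1 - t) * (N + 1)) by (repeat apply Rmult_le_pos; lra).
  lra.
Qed.

End Mu0Bounds.

Theorem proposition5p2 (n : nat) (t : R) :
  (2 <= n)%nat -> 0 <= t <= 1 ->
  - t / INR n >= mu0 n t /\
  mu0 n t >= - (t ^ 2 + (2 * INR n + 1) * t) / (INR n ^ 2 - t) /\
  - (t ^ 2 + (2 * INR n + 1) * t) / (INR n ^ 2 - t) >= - (2 / (INR n - 1)) * t.
Proof.
  intros Hn Ht.
  assert (HN : 1 < INR n) by (apply lt_1_INR; lia).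
  rewrite mu0_INR.
  split; [| split]; apply Rle_ge.
  - now apply mu0R_le_neg_t_div.
  - now apply mu0R_ge_rational_bound.
  - now apply rational_bound_ge_linear.
Qed.
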